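(* Let $\mathbb{F}$ be a field. Every directed tensor-labeled hypergraph $\mathcal{H}=(Q_0,Q_1,\beta)$ with $\delta(\mathcal{H})\ge1$ satisfies $|Q_1|\ge2$ and $|V_{\mathrm{macro}}|\ge3$.
   Context: $T(\mathbb{F}^{Q_0})=\bigoplus_{k\ge0}(\mathbb{F}^{Q_0})^{\otimes k}$. A directed tensor-labeled hypergraph is $\mathcal{H}=(Q_0,Q_1,\beta)$ ($Q_0,Q_1$ finite) with $\beta:\mathbb{F}^{Q_1}\to T(\mathbb{F}^{Q_0})\times T(\mathbb{F}^{Q_0})$ linear, $\beta(\mathbf{1}_e)=(A_e,B_e)$. $V_{\mathrm{macro}}=\{A_e\}\cup\{B_e\}$ (a set); $B_{\mathrm{macro}}:\mathbb{F}^{Q_1}\to\mathbb{F}^{V_{\mathrm{macro}}}$, $\mathbf{1}_e\mapsto\mathbf{1}_{B_e}-\mathbf{1}_{A_e}$; $\hat\phi:\mathbb{F}^{V_{\mathrm{macro}}}\to T(\mathbb{F}^{Q_0})$, $\mathbf{1}_w\mapsto w$; $\delta(\mathcal{H})=\dim(\mathrm{Im}B_{\mathrm{macro}}\cap\mathrm{Ker}\hat\phi)$. *)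

From HB Require Import structures.
From mathcomp Require Import all_boot all_order all_algebra.
From mathcomp Require Import finmap.
From mathcomp Require Import boolp.
From mathcomp.multinomials Require Import monalg.
Set Implicit Arguments. Unset Strict Implicit. Unset Printing Implicit Defensive.
Import Order.TTheory GRing.Theory Num.Theory.
Local Open Scope ring_scope.
Local Open Scope fset_scope.

(* T(F^{Q0}) = \bigoplus_k (F^{Q0})^{\otimes k}: the F-vector space freely
   spanned by the words over Q0 (a word of length k = the basis tensor
   1_{q1} (x) ... (x) 1_{qk} of (F^{Q0})^{\otimes k}). *)
Definition tensorAlg (F : fieldType) (Q0 : finType) : lmodType F :=
  {malg F[seq Q0]}.

Definition beta_type (F : fieldType) (Q0 Q1 : finType) :=
  {linear {ffun Q1 -> F^o} -> (tensorAlg F Q0 * tensorAlg F Q0)%type}.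

Section Hypergraph.
Variables (F : fieldType) (Q0 Q1 : finType) (beta : beta_type F Q0 Q1).

Definition ind (e : Q1) : {ffun Q1 -> F^o} := [ffun e' => (e' == e)%:R].

Definition A_e (e : Q1) : tensorAlg F Q0 := (beta (ind e)).1.
Definition B_e (e : Q1) : tensorAlg F Q0 := (beta (ind e)).2.

Definition Vmacro : {fset tensorAlg F Q0} :=
  [fset A_e e | e : Q1] `|` [fset B_e e | e : Q1].

Definition FV := {ffun Vmacro -> F^o}.

Definition Bmacro (x : {ffun Q1 -> F^o}) : FV :=
  \sum_(e : Q1) x e *:
     [ffun w : Vmacro => (val w == B_e e)%:R - (val w == A_e e)%:R].

Definition phihat (y : FV) : tensorAlg F Q0 :=
  \sum_(w : Vmacro) y w *: val w.

Definition in_ImB_KerPhi (y : FV) : Prop :=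
  (exists x, Bmacro x = y) /\ phihat y = 0.

(* delta(H) = dim (Im B_macro \cap Ker phihat), the dimension being the
   maximal size of a linearly independent family in this subspace
   (such a size is at most dim F^{V_macro} = #|V_macro|). *)
Definition delta : nat :=
  (\max_(n < (#|` Vmacro|).+1 |
      `[< exists X : seq FV,
            [/\ size X = n, free X & forall y, y \in X -> in_ImB_KerPhi y] >])
     n)%N.

End Hypergraph.

(* A vector in Im B_macro has coordinates summing to zero, since every column
   1_{B_e} - 1_{A_e} of B_macro does.  If V_macro had at most two elements,
   such a vector would be (a, -a) on two distinct tensors v, w, and phihat
   would send it to a (v - w), which vanishes only for a = 0.  Hence
   Im B_macro meets Ker phihat trivially and delta = 0.  So delta >= 1 forces
   |V_macro| >= 3, and |Q1| >= 2 follows from |V_macro| <= 2 |Q1|. *)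

From HB Require Import structures.
From mathcomp Require Import all_boot all_order all_algebra.
From mathcomp Require Import finmap.
From mathcomp Require Import boolp.
From mathcomp.multinomials Require Import monalg.
Set Implicit Arguments. Unset Strict Implicit. Unset Printing Implicit Defensive.
Import Order.TTheory GRing.Theory Num.Theory.
Local Open Scope ring_scope.
Local Open Scope fset_scope.

Lemma card_le2_cover (T : finType) (s t u : T) :
  (#|T| <= 2)%N -> s != t -> (u == s) || (u == t).
Proof.
move=> cardT2 neq_st; apply: contraTT cardT2; rewrite negb_or -ltnNge => /andP[].
rewrite -(eq_sym s) -(eq_sym t) => neq_su neq_tu.
have uniq_stu : uniq [:: s; t; u] by rewrite /= !inE negb_or neq_st neq_su neq_tu.
by rewrite -[3%N]/(size [:: s; t; u]) -(card_uniqP uniq_stu) max_card.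
Qed.

Lemma zero_sum_relation_card_le2 (F : fieldType) (V : lmodType F)
    (T : finType) (f : T -> V) (y : T -> F) :
  injective f -> (#|T| <= 2)%N ->
  \sum_t y t = 0 -> \sum_t y t *: f t = 0 -> forall t, y t = 0.
Proof.
move=> inj_f cardT2 sum_y0 rel_y0.
have y_off t s : t != s -> y t = 0.
  move=> neq_ts.
  (* Only the t-term survives: the s-term vanishes and there is no third index. *)
  have : \sum_u y u *: (f u - f s) = 0.
    rewrite (eq_bigr _ (fun u _ => scalerBr _ _ _)) sumrB -scaler_suml.
    by rewrite sum_y0 rel_y0 scale0r subrr.
  rewrite (bigD1 t) //= big1 => [|u neq_ut]; last first.
    case/orP: (card_le2_cover u cardT2 neq_ts) => [eq_ut|/eqP->].
      by rewrite eq_ut in neq_ut.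
    by rewrite subrr scaler0.
  rewrite addr0 => /eqP; rewrite scaler_eq0 subr_eq0 => /orP[/eqP //|/eqP/inj_f eq_ts].
  by rewrite eq_ts eqxx in neq_ts.
move=> t; rewrite -sum_y0 (bigD1 t) //= big1 ?addr0 // => s neq_st.
exact: y_off neq_st.
Qed.

Section Hypergraph.
Variables (F : fieldType) (Q0 Q1 : finType) (beta : beta_type F Q0 Q1).

Lemma card_Vmacro_le : (#|` Vmacro beta| <= #|Q1| + #|Q1|)%N.
Proof.
apply: leq_trans (leq_card_fsetU _ _) _.
by apply: leq_add; apply: leq_trans (leq_imfset_card _ _ _) _; rewrite cardE.
Qed.

Lemma A_e_in_Vmacro e : A_e beta e \in Vmacro beta.
Proof. by rewrite in_fsetU in_imfset. Qed.

Lemma B_e_in_Vmacro e : B_e beta e \in Vmacro beta.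
Proof. by rewrite in_fsetU [X in _ || X]in_imfset ?orbT. Qed.

Lemma sum_indicator_Vmacro (v : tensorAlg F Q0) : v \in Vmacro beta ->
  \sum_(w : Vmacro beta) ((val w == v)%:R : F^o) = 1.
Proof.
move=> Vv; rewrite (bigD1 [` Vv]) //= eqxx big1 ?addr0 // => w neq_wv.
by case: eqP => // eq_wv; case/eqP: neq_wv; apply: val_inj.
Qed.

Lemma sum_Bmacro x : \sum_(w : Vmacro beta) Bmacro beta x w = 0.
Proof.
under eq_bigr do rewrite sum_ffunE.
rewrite exchange_big big1 // => e _.
under eq_bigr do rewrite !ffunE.
rewrite -mulr_sumr sumrB; transitivity (x e * (1 - 1)); last by rewrite subrr mulr0.
congr (_ * (_ - _)); apply: sum_indicator_Vmacro.
  exact: B_e_in_Vmacro.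
exact: A_e_in_Vmacro.
Qed.

Lemma delta_eq0 : (forall y : FV beta, in_ImB_KerPhi y -> y = 0) -> delta beta = 0%N.
Proof.
move=> ImB_KerPhi_0; apply/eqP; rewrite -leqn0; apply/bigmax_leqP => n.
move=> /asboolP[[|y X] [<- // free_yX yX_in]].
have := free_not0 free_yX (mem_head y X).
by rewrite (ImB_KerPhi_0 y (yX_in y (mem_head y X))) eqxx.
Qed.

Lemma ImB_KerPhi_trivial : (#|` Vmacro beta| <= 2)%N ->
  forall y : FV beta, in_ImB_KerPhi y -> y = 0.
Proof.
move=> cardV2 y [[x <-] phi0]; apply/ffunP => w; rewrite ffunE.
apply: (zero_sum_relation_card_le2 val_inj) phi0 w => //.
  by rewrite -cardfE.
exact: sum_Bmacro.
Qed.

End Hypergraph.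

Theorem proposition4p9 (F : fieldType) (Q0 Q1 : finType)
    (beta : beta_type F Q0 Q1) :
  (1 <= delta beta)%N -> (2 <= #|Q1|)%N /\ (3 <= #|` Vmacro beta|)%N.
Proof.
move=> delta_pos.
have cardV3 : (3 <= #|` Vmacro beta|)%N.
  rewrite ltnNge; apply: contraL delta_pos => cardV2.
  by rewrite delta_eq0 //; exact: ImB_KerPhi_trivial.
split=> //; have := leq_trans cardV3 (card_Vmacro_le beta).
by rewrite addnn -(ltn_double 1).
Qed.
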